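(* Let $n,r\ge1$ be integers and $\mathbf G=\mathbf G(r,1,n)$ with the subgroup sequence, coset leaders and initial vector described in the context. Then the subgroup decoding algorithm decodes robustly: for all $g\in\mathbf G$, any received vector in the decoding region of $g$ decodes to $g$.
   Context: $\mathbf G(r,1,n)$ is the group of $n\times n$ complex monomial matrices whose nonzero entries are $r$-th roots of unity. Let $\xi=e^{2\pi i/r}$, let $a_i$ ($1\le i\le n$) be the diagonal matrix multiplying the $i$-th coordinate by $\xi$, and $b_j$ ($1\le j<n$) the permutation matrix swapping coordinates $j$ and $j+1$. Subgroups (block diagonal): $\mathbf G_0=\{I\}$, $\mathbf G_{2l-1}=\mathbf G(r,1,l)\oplus\{I_{n-l}\}$ ($1\le l\le n$), $\mathbf G_{2l}=\mathbf G(r,1,l)\oplus\mathbf G(r,1,1)\oplus\{I_{n-l-1}\}$ ($1\le l\le n-1$). Coset leaders: $\operatorname{CL}(\mathbf G_1/\mathbf G_0)=\{I,a_1,\dots,a_1^{r-1}\}$, $\operatorname{CL}(\mathbf G_{2l}/\mathbf G_{2l-1})=\{I,a_{l+1},\dots,a_{l+1}^{r-1}\}$, $\operatorname{CL}(\mathbf G_{2l+1}/\mathbf G_{2l})=\{I,b_l,b_{l-1}b_l,\dots,b_1b_2\cdots b_l\}$. Initial vector $\mathbf x_0=(u_1,\dots,u_n)$ with real $0<u_1<\cdots<u_n$, $\|\mathbf x_0\|=1$ (standard Hermitian inner product). $S=\operatorname{Stab}_{\mathbf G}(\mathbf x_0)$. Decoding region of $g$: $\operatorname{DR}(g)=\{\mathbf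 x:\|g\mathbf x-\mathbf x_0\|<\|a\mathbf x-\mathbf x_0\|\ \forall a\notin Sg\}$. Subgroup decoding algorithm: $\mathbf r_0=\mathbf r$; for $k=1,\dots,2n-1$ choose $d_k\in\operatorname{CL}(\mathbf G_k/\mathbf G_{k-1})$ minimizing $\|a\mathbf r_{k-1}-\mathbf x_0\|$ (ties broken by a fixed ordering), $\mathbf r_k=d_k\mathbf r_{k-1}$; output $d_{2n-1}\cdots d_1$, regarded as decoding to $g$ when it lies in $Sg$. *)

(* Complex numbers are modelled by an arbitrary
   numClosedFieldType C (e.g. algC, or complex R for R : realType). *)
From HB Require Import structures.
From mathcomp Require Import all_boot all_order all_algebra.
Set Implicit Arguments. Unset Strict Implicit. Unset Printing Implicit Defensive.
Import Order.TTheory GRing.Theory Num.Theory.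
Local Open Scope ring_scope.

Section GR1n.
Variables (C : numClosedFieldType) (n : nat).
Local Notation M := 'M[C]_n.
Local Notation V := 'cV[C]_n.

Definition hnorm (v : V) : C := sqrtC (\sum_i v i 0 * (v i 0)^*).

(* G(r,1,n): monomial matrices whose nonzero entries are r-th roots of unity. *)
Definition inG (r : nat) (A : M) : bool :=
  [forall i, #|[set j | A i j != 0]| == 1%N] &&
  [forall j, #|[set i | A i j != 0]| == 1%N] &&
  [forall i, forall j, (A i j != 0) ==> (A i j ^+ r == 1)].

Definition inStab (r : nat) (x0 : V) (s : M) : Prop := inG r s /\ s *m x0 = x0.
Definition inSg (r : nat) (x0 : V) (g a : M) : Prop :=
  exists s, inStab r x0 s /\ a = s *m g.

Definition inDR (r : nat) (x0 : V) (g : M) (x : V) : Prop :=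
  forall a : M, inG r a -> ~ inSg r x0 g a ->
    hnorm (g *m x - x0) < hnorm (a *m x - x0).

(* Generators, with 1-based indices as in the paper:
   a_i (1 <= i <= n) multiplies coordinate i by xi;
   b_j (1 <= j < n) swaps coordinates j and j+1. *)
Definition gen_a (xi : C) (i : nat) : M :=
  \matrix_(p, q) (if p == q then (if (p.+1 == i)%N then xi else 1) else 0).

Definition swap_nat (j p : nat) : nat :=
  if (p.+1 == j)%N then j else if (p == j)%N then j.-1 else p.

Definition gen_b (j : nat) : M :=
  \matrix_(p, q) ((nat_of_ord q == swap_nat j p)%:R : C).

(* Coset leaders of G_k / G_{k-1}, k = 1, ..., 2n-1:
   k = 1 or k = 2l : {I, a_{l+1}, ..., a_{l+1}^(r-1)}   (l = k/2)
   k = 2l+1, l>=1  : {I, b_l, b_{l-1} b_l, ..., b_1 b_2 ... b_l}. *)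
Definition CL_a (xi : C) (r i : nat) : seq M :=
  [seq iter e (mulmx (gen_a xi i)) 1%:M | e <- iota 0 r].

Definition CL_b (l : nat) : seq M :=
  [seq foldr (fun j P => gen_b j *m P) 1%:M (iota (l - m).+1 m) | m <- iota 0 l.+1].

Definition CL (xi : C) (r k : nat) : seq M :=
  if odd k && (1 < k)%N then CL_b k./2 else CL_a xi r (k./2).+1.

(* A run of the subgroup decoding algorithm is a choice d_1, d_2, ... of
   coset leaders, each minimizing the distance at its step (ties may be
   broken arbitrarily). r_k = d_k r_{k-1}; output d_k ... d_1. *)
Fixpoint resid (d : nat -> M) (y : V) (k : nat) : V :=
  if k is k'.+1 then d k'.+1 *m resid d y k' else y.

Fixpoint outp (d : nat -> M) (k : nat) : M :=
  if k is k'.+1 then d k'.+1 *m outp d k' else 1%:M.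

Definition is_run (xi : C) (r : nat) (x0 y : V) (d : nat -> M) : Prop :=
  forall k, (1 <= k <= (2 * n).-1)%N ->
    d k \in CL xi r k /\
    forall a, a \in CL xi r k ->
      hnorm (d k *m resid d y k.-1 - x0) <= hnorm (a *m resid d y k.-1 - x0).

End GR1n.

(* Every element of G(r,1,n) is a monomial matrix, so it preserves the norm and
   ||A y - x0||^2 = ||y||^2 + ||x0||^2 - 2 Re <A y, x0>: comparing distances of the
   A y to x0 amounts to comparing their correlations with the positive, increasing
   vector x0.  Each a-step makes one coordinate of the residual maximal in real part
   among its rotations by r-th roots of unity, and each b-step inserts that
   coordinate into the already sorted prefix at a place beating both neighbours, so
   the final residual w = D y (D the output) has all coordinates rotation-maximal
   and sorted by real part.  By the rearrangement inequality w is then maximally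
   correlated among all the A w, A in G.  If D were not in S g, writing g = B D,
   membership of y in DR(g) would give corr(D y) < corr(B w) <= corr(w), which is
   absurd. *)

From HB Require Import structures.
From mathcomp Require Import all_boot all_order all_algebra all_fingroup.
From mathcomp Require Import ring zify.
From Stdlib Require Import Classical.
Set Implicit Arguments. Unset Strict Implicit. Unset Printing Implicit Defensive.
Import Order.TTheory GRing.Theory Num.Theory.
Local Open Scope ring_scope.

Section MonomialMatrix.
Variables (R : nzRingType) (n : nat).
Implicit Types (s t : 'S_n) (c e : 'I_n -> R) (v : 'cV[R]_n).

Definition monomial_mx s c : 'M[R]_n := \matrix_(i, j) ((j == s i)%:R * c i).

Lemma eq_monomial_mx s c e : c =1 e -> monomial_mx s c = monomial_mx s e.
Proof. by move=> ce; apply/matrixP => i j; rewrite !mxE ce. Qed.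

Lemma monomial_mxMv s c v : monomial_mx s c *m v = \col_i (c i * v (s i) 0).
Proof.
apply/matrixP => i k; rewrite !mxE (bigD1 (s i)) //= big1 ?addr0.
  by rewrite mxE eqxx mul1r (ord1 k).
by move=> j /negPf sij; rewrite mxE sij !mul0r.
Qed.

Lemma monomial_mxM s c t e :
  monomial_mx s c *m monomial_mx t e =
  monomial_mx (s * t)%g (fun i => c i * e (s i)).
Proof.
apply/matrixP => i k; rewrite !mxE (bigD1 (s i)) //= big1 ?addr0.
  rewrite !mxE eqxx mul1r permM.
  by case: (k == t (s i)); rewrite ?mul1r ?mul0r ?mulr0.
by move=> j /negPf sij; rewrite mxE sij !mul0r.
Qed.

Lemma monomial_mx1 : monomial_mx 1%g (fun=> 1) = 1%:M.
Proof. by apply/matrixP => i j; rewrite !mxE perm1 mulr1 eq_sym. Qed.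

End MonomialMatrix.

Section UnityRoots.
Variable r : nat.
Hypothesis r_gt0 : (0 < r)%N.

Lemma norm_root_unity (R : numDomainType) (x : R) : x ^+ r = 1 -> `|x| = 1.
Proof.
move=> xr1; apply/eqP; rewrite -(pexpr_eq1 r_gt0) ?normr_ge0 //.
by rewrite -normrX xr1 normr1.
Qed.

Lemma root_unity_neq0 (R : numDomainType) (x : R) : x ^+ r = 1 -> x != 0.
Proof.
by move/norm_root_unity; apply: contra_eq_neq => ->; rewrite normr0 eq_sym oner_neq0.
Qed.

Lemma root_unity_conjK (C : numClosedFieldType) (x : C) : x ^+ r = 1 -> x * x^* = 1.
Proof. by move=> xr1; rewrite -normCK norm_root_unity // expr1n. Qed.

End UnityRoots.

Section MonomialGroup.
Variables (C : numClosedFieldType) (n r : nat).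

Definition monomial (A : 'M[C]_n) : Prop :=
  exists s c, (forall i, c i ^+ r = 1) /\ A = monomial_mx s c.

Lemma monomial1 : monomial 1%:M.
Proof. by exists 1%g, (fun=> 1); rewrite monomial_mx1 expr1n. Qed.

Lemma monomialM A B : monomial A -> monomial B -> monomial (A *m B).
Proof.
move=> [s [c [cr ->]]] [t [e [er ->]]]; rewrite monomial_mxM.
by do 2!eexists; split; last reflexivity; move=> i; rewrite exprMn cr er mulr1.
Qed.

Hypothesis r_gt0 : (0 < r)%N.

Lemma monomial_divr A D : monomial A -> monomial D ->
  exists B, monomial B /\ A = B *m D.
Proof.
move=> [s [c [cr ->]]] [t [e [er ->]]].
exists (monomial_mx (s * t^-1)%g (fun i => c i / e (t^-1 (s i))%g)); split.
  do 2!eexists; split; last reflexivity.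
  by move=> i; rewrite exprMn exprVn cr er invr1 mulr1.
rewrite monomial_mxM mulgKV; apply: eq_monomial_mx => i.
by rewrite permM mulfVK // (root_unity_neq0 r_gt0).
Qed.

Lemma inG_monomial A : inG r A <-> monomial A.
Proof.
split; last first.
  move=> [s [c [cr ->]]]; have c_neq0 i := root_unity_neq0 r_gt0 (cr i).
  have sE i j : (monomial_mx s c i j != 0) = (j == s i).
    by rewrite mxE; case: (j == s i); rewrite ?mul1r ?mul0r ?eqxx ?c_neq0.
  apply/andP; split; [apply/andP; split|].
  - apply/forallP => i; apply/cards1P; exists (s i).
    by apply/setP => j; rewrite !inE sE.
  - apply/forallP => j; apply/cards1P; exists (s^-1 j)%g.
    by apply/setP => i; rewrite !inE sE -(inj_eq (@perm_inj _ s^-1%g)) permK eq_sym.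
  - apply/'forall_forallP => i j; apply/implyP; rewrite sE => /eqP->.
    by rewrite mxE eqxx mul1r cr.
case/andP => /andP [/forallP rows /forallP cols] /forallP ents.
have row1 i : exists j, [set j' | A i j' != 0] == [set j].
  by have /cards1P [j ->] := rows i; exists j.
pose f i := xchoose (row1 i).
have Af i j : (A i j != 0) = (j == f i).
  by move/eqP/setP: (xchooseP (row1 i)) => /(_ j); rewrite !inE.
have f_inj : injective f.
  move=> i i' fii'; have /cards1P [k colk] := cols (f i).
  have : i \in [set i0 | A i0 (f i) != 0] by rewrite inE Af.
  have : i' \in [set i0 | A i0 (f i) != 0] by rewrite inE Af fii'.
  by rewrite colk !inE => /eqP-> /eqP->.
exists (perm f_inj), (fun i => A i (f i)); split.
  by move=> i; apply/eqP; have /implyP := forallP (ents i) (f i); apply; rewrite Af.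
apply/matrixP => i j; rewrite mxE permE; have := Af i j.
case: (eqVneq j (f i)) => [->|_]; rewrite ?mul1r //= mul0r.
by move=> /negbT; rewrite negbK => /eqP.
Qed.

End MonomialGroup.

Section Rearrangement.
Variables (R : numDomainType) (n : nat).

Lemma sumr_diff2 (F G : 'I_n -> R) j k : j != k ->
  (forall i, i != j -> i != k -> F i = G i) ->
  \sum_i F i = \sum_i G i + (F j - G j) + (F k - G k).
Proof.
move=> jk FG; rewrite [\sum_i F i](bigD1 j) // [\sum_i G i](bigD1 j) //=.
rewrite [\sum_(i | i != j) F i](bigD1 k) 1?eq_sym //.
rewrite [\sum_(i | i != j) G i](bigD1 k) 1?eq_sym //=.
rewrite (eq_bigr G); last by move=> i /andP [ij ik]; apply: FG.
ring.
Qed.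

Lemma rearrangement (a b : 'I_n -> R) :
  (forall i j : 'I_n, (i <= j)%N -> a i <= a j) ->
  (forall i j : 'I_n, (i <= j)%N -> b i <= b j) ->
  forall s : 'S_n, \sum_i a i * b (s i) <= \sum_i a i * b i.
Proof.
move=> a_mono b_mono.
suff fixed_ge k : (k <= n)%N -> forall s : 'S_n,
    (forall i : 'I_n, (k <= i)%N -> s i = i) ->
    \sum_i a i * b (s i) <= \sum_i a i * b i.
  by move=> s; apply: (fixed_ge n) => // i; rewrite leqNgt ltn_ord.
elim: k => [_ s s1|k IH lt_kn s s_fix].
  by rewrite le_eqVlt (eq_bigr (fun i => a i * b i)) ?eqxx // => i _; rewrite s1.
pose K := Ordinal lt_kn.
have eqK (i : 'I_n) : k = i -> i = K by move=> ki; apply/val_inj.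
have [sK|sK] := eqVneq (s K) K.
  apply: (IH (ltnW lt_kn) s) => i.
  by rewrite leq_eqVlt => /predU1P [/eqK ->|/s_fix].
pose j := (s^-1 K)%g; pose m := s K.
have sj : s j = K by rewrite permKV.
have lt_k i : i != K -> s i != i -> (i < k)%N.
  move=> iK si; rewrite ltn_neqAle iK /= leqNgt.
  by apply: contra si => /s_fix ->.
have jK : j != K by apply/eqP => jK; move: sK; rewrite -{1}jK sj eqxx.
have jk : (j < k)%N by apply: (lt_k _ jK); rewrite sj eq_sym.
have mk : (m < k)%N by apply: (lt_k _ sK); rewrite /m (inj_eq perm_inj).
pose s' := (tperm j K * s)%g.
have s'_fix (i : 'I_n) : (k <= i)%N -> s' i = i.
  rewrite leq_eqVlt => /predU1P [/eqK ->|ki]; first by rewrite permM tpermR.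
  rewrite permM tpermD ?s_fix // -(inj_eq val_inj) /= neq_ltn.
    by rewrite (ltn_trans jk ki).
  by rewrite ki.
apply: le_trans (IH (ltnW lt_kn) s' s'_fix).
rewrite (@sumr_diff2 (fun i => a i * b (s' i)) (fun i => a i * b (s i)) j K jK);
  last by move=> i ij iK; rewrite permM tpermD // eq_sym.
rewrite !permM tpermL tpermR sj -/m -addrA lerDl.
have -> : a j * b m - a j * b K + (a K * b K - a K * b m) =
          (a K - a j) * (b K - b m) by ring.
by rewrite mulr_ge0 // subr_ge0; [apply: a_mono | apply: b_mono]; apply: ltnW.
Qed.

End Rearrangement.

Section Correlation.
Variables (C : numClosedFieldType) (n : nat).
Implicit Types (u v w : 'cV[C]_n).

Definition sqnorm v := \sum_i v i 0 * (v i 0)^*.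

(* [re2 z] is [2 'Re z]; it avoids the division by 2. *)
Definition re2 (z : C) := z + z^*.

Definition corr (x0 v : 'cV[C]_n) := \sum_i x0 i 0 * re2 (v i 0).

Lemma sqnorm_ge0 v : 0 <= sqnorm v.
Proof. by apply: sumr_ge0 => i _; apply: mul_conjC_ge0. Qed.

Lemma hnorm_leE u v : (hnorm u <= hnorm v) = (sqnorm u <= sqnorm v).
Proof. by apply: ler_sqrtC; rewrite nnegrE sqnorm_ge0. Qed.

Lemma hnorm_ltE u v : (hnorm u < hnorm v) = (sqnorm u < sqnorm v).
Proof. by apply: ltr_sqrtC; rewrite nnegrE sqnorm_ge0. Qed.

Lemma sqnormB (x0 v : 'cV[C]_n) : (forall i, (x0 i 0)^* = x0 i 0) ->
  sqnorm (v - x0) = sqnorm v - corr x0 v + sqnorm x0.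
Proof.
move=> x0_real; rewrite /sqnorm /corr -sumrB -big_split /=.
by apply: eq_bigr => i _; rewrite !mxE rmorphB /= x0_real /re2; ring.
Qed.

Lemma corr_le_at (x0 v v' : 'cV[C]_n) i0 : 0 < x0 i0 0 ->
  (forall i, i != i0 -> v i 0 = v' i 0) ->
  (corr x0 v <= corr x0 v') = (re2 (v i0 0) <= re2 (v' i0 0)).
Proof.
move=> x0_gt0 vv'; rewrite /corr (bigD1 i0) //= [X in _ <= X](bigD1 i0) //=.
by rewrite (eq_bigr (fun i => x0 i 0 * re2 (v' i 0))) ?lerD2r ?ler_pM2l // => i /vv'->.
Qed.

Lemma corr_swap (x0 v v' : 'cV[C]_n) j k : j != k ->
  (forall i, i != j -> i != k -> v i 0 = v' i 0) ->
  v j 0 = v' k 0 -> v k 0 = v' j 0 ->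
  corr x0 v = corr x0 v' + (x0 k 0 - x0 j 0) * (re2 (v k 0) - re2 (v j 0)).
Proof.
move=> jk vv' vj vk; rewrite /corr.
rewrite (sumr_diff2 (G := fun i => x0 i 0 * re2 (v' i 0)) jk);
  last by move=> i ij ik; rewrite vv'.
by rewrite -addrA vj -vk; congr (_ + _); rewrite /re2; ring.
Qed.

Variable r : nat.
Hypothesis r_gt0 : (0 < r)%N.

Lemma sqnorm_monomial A v : monomial r A -> sqnorm (A *m v) = sqnorm v.
Proof.
move=> [s [c [cr ->]]]; rewrite monomial_mxMv /sqnorm.
rewrite [RHS](reindex_inj (@perm_inj _ s)) /=; apply: eq_bigr => i _.
rewrite mxE rmorphM /= -[RHS]mul1r -(root_unity_conjK r_gt0 (cr i)); ring.
Qed.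

Section Comparison.
Variables (x0 u : 'cV[C]_n) (A B : 'M[C]_n).
Hypotheses (x0_real : forall i, (x0 i 0)^* = x0 i 0).
Hypotheses (monA : monomial r A) (monB : monomial r B).

Lemma hnorm_monomial_le :
  (hnorm (A *m u - x0) <= hnorm (B *m u - x0)) =
  (corr x0 (B *m u) <= corr x0 (A *m u)).
Proof. by rewrite hnorm_leE !sqnormB // !sqnorm_monomial // lerD2r lerD2l lerN2. Qed.

Lemma hnorm_monomial_lt :
  (hnorm (A *m u - x0) < hnorm (B *m u - x0)) =
  (corr x0 (B *m u) < corr x0 (A *m u)).
Proof. by rewrite hnorm_ltE !sqnormB // !sqnorm_monomial // ltrD2r ltrD2l ltrN2. Qed.

End Comparison.

Definition rot_max (z : C) := forall c : C, c ^+ r = 1 -> re2 (c * z) <= re2 z.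

Lemma corr_monomial_le (x0 w : 'cV[C]_n) A :
  (forall i, 0 <= x0 i 0) ->
  (forall i j : 'I_n, (i <= j)%N -> x0 i 0 <= x0 j 0) ->
  (forall i, rot_max (w i 0)) ->
  (forall i j : 'I_n, (i <= j)%N -> re2 (w i 0) <= re2 (w j 0)) ->
  monomial r A -> corr x0 (A *m w) <= corr x0 w.
Proof.
move=> x0_ge0 x0_mono w_max w_mono [s [c [cr ->]]].
rewrite /corr monomial_mxMv; apply: le_trans (rearrangement x0_mono w_mono s).
by apply: ler_sum => i _; rewrite mxE ler_wpM2l ?w_max.
Qed.

End Correlation.

Section CosetLeaders.
Variables (C : numClosedFieldType) (N : nat).
Local Notation n := N.+1.

Lemma CL_a_elemE (xi : C) i e :
  iter e (mulmx (gen_a n xi i)) 1%:M =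
  monomial_mx 1%g (fun p : 'I_n => if p.+1 == i then xi ^+ e else 1).
Proof.
elim: e => [|e IH] /=.
  by rewrite -monomial_mx1; apply: eq_monomial_mx => p; case: ifP.
rewrite IH; have -> : gen_a n xi i =
    monomial_mx 1%g (fun p : 'I_n => if p.+1 == i then xi else 1).
  apply/matrixP => p q; rewrite !mxE perm1 eq_sym.
  by case: (q == p); rewrite ?mul1r ?mul0r.
rewrite monomial_mxM mulg1; apply: eq_monomial_mx => p.
by rewrite perm1; case: ifP; rewrite ?mulr1 ?exprS.
Qed.

Lemma CL_a_mulmx (xi : C) i e (u : 'cV[C]_n) (p : 'I_n) :
  (iter e (mulmx (gen_a n xi i.+1)) 1%:M *m u) p 0 =
  (if p == i :> nat then xi ^+ e else 1) * u p 0.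
Proof. by rewrite CL_a_elemE monomial_mxMv mxE perm1 eqSS. Qed.

(* [b_j] swaps the 0-based coordinates [j-1] and [j]. *)
Definition adj_tperm (j : nat) : 'S_n := tperm (inord j.-1) (inord j).

Lemma adj_tpermE j (p : 'I_n) : (0 < j <= N)%N -> adj_tperm j p = swap_nat j p :> nat.
Proof.
move=> j_range; have eq_inord q : (q <= N)%N -> (p == inord q) = (p == q :> nat).
  by move=> qN; rewrite -(inj_eq val_inj) /= inordK.
rewrite /adj_tperm /swap_nat.
case: tpermP => [->|->|/eqP + /eqP]; rewrite ?eq_inord ?inordK; try lia;
  by repeat case: ifP; lia.
Qed.

Lemma gen_bE j : (0 < j <= N)%N -> gen_b C n j = monomial_mx (adj_tperm j) (fun=> 1).
Proof. by move=> j_range; apply/matrixP => p q; rewrite !mxE mulr1 -adj_tpermE. Qed.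

Definition ins_idx (p L i : nat) : nat :=
  if i == p then L else if (p < i <= L)%N then i.-1 else i.

(* Coordinate [L] of [u] moved to position [p], coordinates [p..L-1] shifted up. *)
Definition insert_col (p L : nat) (u : 'cV[C]_n) : 'cV[C]_n :=
  \col_(i < n) u (inord (ins_idx p L i)) 0.

Lemma insert_colE p L (u : 'cV[C]_n) t : (t <= N)%N ->
  insert_col p L u (inord t) 0 = u (inord (ins_idx p L t)) 0.
Proof. by move=> tN; rewrite mxE inordK. Qed.

Lemma CL_b_mulmx L m (u : 'cV[C]_n) : (m <= L <= N)%N ->
  foldr (fun j P => gen_b C n j *m P) 1%:M (iota (L - m).+1 m) *m u =
  insert_col (L - m) L u.
Proof.
elim: m => [|m IH] mL /=.
  rewrite mul1mx subn0; apply/matrixP => i k; rewrite mxE (ord1 k) /ins_idx.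
  by case: eqP => [<-|_]; rewrite ?ifN ?inord_val //; lia.
have -> : ((L - m.+1).+1 = L - m)%N by lia.
rewrite -mulmxA IH; last by lia.
rewrite gen_bE; last by lia.
apply/matrixP => i k; rewrite monomial_mxMv !mxE mul1r; congr (u (inord _) 0).
rewrite adj_tpermE /ins_idx /swap_nat; last by lia.
by repeat case: ifP; lia.
Qed.

Variables (xi : C) (r : nat).
Hypothesis xi_r : xi ^+ r = 1.

Lemma CL_monomial k A : (1 <= k <= (2 * n).-1)%N -> A \in CL n xi r k ->
  monomial r A.
Proof.
rewrite mul2n doubleS /= => /andP [_ k_le]; rewrite /CL; case: ifP => _.
  have half_le : (k./2 <= N)%N.
    by rewrite -[N](half_bit_double N true) half_leq.
  case/mapP => m; rewrite mem_iota => m_range ->.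
  have : all (fun j => 0 < j <= N)%N (iota (k./2 - m).+1 m).
    by apply/allP => j; rewrite mem_iota; lia.
  elim: (iota _ _) => [_|j js IH] /=; first exact: monomial1.
  case/andP => j_range /IH; apply: monomialM; rewrite gen_bE //.
  by exists (adj_tperm j), (fun=> 1); rewrite expr1n.
case/mapP => e _ ->; rewrite CL_a_elemE; do 2!eexists; split; last reflexivity.
by move=> i /=; case: ifP; rewrite ?expr1n // exprAC xi_r expr1n.
Qed.

End CosetLeaders.

Section Insertion.
Variables (C : numClosedFieldType) (N r : nat).
Local Notation n := N.+1.
Implicit Types (u v : 'cV[C]_n) (p L t : nat).

Definition normalized_prefix L u :=
  (forall t, (t <= L)%N -> rot_max r (u (inord t) 0)) /\
  (forall t, (t < L)%N -> re2 (u (inord t) 0) <= re2 (u (inord t.+1) 0)).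

Lemma ins_idx_at p L : ins_idx p L p = L.
Proof. by rewrite /ins_idx eqxx. Qed.

Lemma ins_idx_shift p L t : (p < t <= L)%N -> ins_idx p L t = t.-1.
Proof. by rewrite /ins_idx; repeat case: ifP; lia. Qed.

Lemma ins_idx_id p L t : (p <= L)%N -> (t < p)%N || (L < t)%N -> ins_idx p L t = t.
Proof. by rewrite /ins_idx; repeat case: ifP; lia. Qed.

Lemma ins_idx_le p L t : (p <= L)%N -> (t <= L)%N -> (ins_idx p L t <= L)%N.
Proof. by rewrite /ins_idx; repeat case: ifP; lia. Qed.

Lemma corr_insert_colS (x0 : 'cV[C]_n) p L u : (p < L <= N)%N ->
  corr x0 (insert_col p.+1 L u) = corr x0 (insert_col p L u) +
    (x0 (inord p.+1) 0 - x0 (inord p) 0) *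
    (re2 (u (inord L) 0) - re2 (u (inord p) 0)).
Proof.
move=> pL; have p_neq : (inord p : 'I_n) != inord p.+1.
  by rewrite -(inj_eq val_inj) /= !inordK //; lia.
have insE q t : (t <= N)%N -> insert_col q L u (inord t) 0 = u (inord (ins_idx q L t)) 0.
  exact: insert_colE.
have idx_p : ins_idx p.+1 L p = p by rewrite ins_idx_id //; lia.
have idx_p1 : ins_idx p L p.+1 = p by rewrite ins_idx_shift //; lia.
rewrite (corr_swap (v' := insert_col p L u) _ p_neq); first 1 last.
- move=> i ip ip1; rewrite !mxE; congr (u (inord _) 0).
  move: ip ip1; rewrite -!(inj_eq val_inj) /= !inordK; try lia.
  by move=> ip ip1; rewrite /ins_idx; repeat case: ifP; lia.
- by rewrite !insE ?idx_p ?idx_p1 //; lia.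
- by rewrite !insE ?ins_idx_at //; lia.
by rewrite !insE ?ins_idx_at ?idx_p //; lia.
Qed.

Section NeighbourInsertions.
Variables (x0 : 'cV[C]_n) (p L : nat) (u : 'cV[C]_n).
Hypotheses (pL : (p < L <= N)%N) (x0_lt : x0 (inord p) 0 < x0 (inord p.+1) 0).

Lemma corr_insert_colS_le :
  (corr x0 (insert_col p.+1 L u) <= corr x0 (insert_col p L u)) =
  (re2 (u (inord L) 0) <= re2 (u (inord p) 0)).
Proof. by rewrite corr_insert_colS // gerDl pmulr_rle0 ?subr_gt0 ?subr_le0. Qed.

Lemma corr_insert_colS_ge :
  (corr x0 (insert_col p L u) <= corr x0 (insert_col p.+1 L u)) =
  (re2 (u (inord p) 0) <= re2 (u (inord L) 0)).
Proof. by rewrite corr_insert_colS // lerDl pmulr_rge0 ?subr_gt0 ?subr_ge0. Qed.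

End NeighbourInsertions.

Lemma insert_col_normalized p L u : (p <= L <= N)%N ->
  normalized_prefix L.-1 u -> rot_max r (u (inord L) 0) ->
  ((p < L)%N -> re2 (u (inord L) 0) <= re2 (u (inord p) 0)) ->
  ((0 < p)%N -> re2 (u (inord p.-1) 0) <= re2 (u (inord L) 0)) ->
  normalized_prefix L (insert_col p L u).
Proof.
move=> pL [u_max u_sorted] uL_max le_Lp le_pL.
split=> t tL; rewrite !insert_colE; try lia.
  have : (ins_idx p L t <= L)%N by apply: ins_idx_le; lia.
  rewrite leq_eqVlt => /predU1P [->|lt_L].
    exact: uL_max.
  by apply: u_max; lia.
have [lt_t1p|lt_pt1|eq_t1p] := ltngtP t.+1 p.
- by rewrite !ins_idx_id; try lia; apply: u_sorted; lia.
- have [->|lt_pt] := eqVneq t p.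
    by rewrite ins_idx_at ins_idx_shift //=; [apply: le_Lp|]; lia.
  rewrite !ins_idx_shift /=; try lia.
  by have := u_sorted t.-1; rewrite prednK; [apply; lia | lia].
- rewrite ins_idx_id; try lia.
  by rewrite eq_t1p ins_idx_at; move: le_pL; rewrite -eq_t1p; apply.
Qed.

Lemma normalized_prefix_eq L u v :
  (forall t, (t <= L)%N -> u (inord t) 0 = v (inord t) 0) ->
  normalized_prefix L u -> normalized_prefix L v.
Proof.
move=> uv [u_max u_sorted]; split=> t tL; first by rewrite -uv //; apply: u_max.
by rewrite -!uv ?u_sorted // ltnW.
Qed.

Lemma normalized_prefix_full u : normalized_prefix N u ->
  (forall i, rot_max r (u i 0)) /\
  (forall i j : 'I_n, (i <= j)%N -> re2 (u i 0) <= re2 (u j 0)).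
Proof.
move=> [u_max u_sorted]; split=> [i|i j ij].
  by rewrite -(inord_val i); apply: u_max; rewrite -ltnS.
have re2_mono : {in [pred t | (t <= N)%N] &,
    {homo (fun t => re2 (u (inord t) 0)) : a b / (a <= b)%N >-> a <= b}}.
  apply: homo_leq_in; [exact: lexx | exact: le_trans | | ].
    by move=> a b aN bN c; rewrite !inE in aN bN *; lia.
  by move=> t _; rewrite !inE => /u_sorted.
by rewrite -(inord_val i) -(inord_val j) re2_mono // inE -ltnS.
Qed.

End Insertion.

Section Run.
Variables (C : numClosedFieldType) (N r : nat) (xi : C) (x0 y : 'cV[C]_N.+1).
Variable d : nat -> 'M[C]_N.+1.
Local Notation n := N.+1.
Hypotheses (r_gt0 : (0 < r)%N) (xi_prim : r.-primitive_root xi).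
Hypothesis x0_gt0 : forall i, 0 < x0 i 0.
Hypothesis x0_incr : forall i j : 'I_n, (i < j)%N -> x0 i 0 < x0 j 0.
Hypothesis run : is_run xi r x0 y d.

Lemma last_step : (2 * n).-1 = N.*2.+1.
Proof. by rewrite mul2n doubleS. Qed.

Lemma x0_real i : (x0 i 0)^* = x0 i 0.
Proof. exact/geC0_conj/ltW. Qed.

Lemma run_monomial k : (1 <= k <= (2 * n).-1)%N -> monomial r (d k).
Proof.
move=> k_range.
exact: (CL_monomial (prim_expr_order xi_prim) k_range (proj1 (run k_range))).
Qed.

Lemma run_corr_max k A : (1 <= k <= (2 * n).-1)%N -> A \in CL n xi r k ->
  corr x0 (A *m resid d y k.-1) <= corr x0 (resid d y k).
Proof.
case: k => // k k_range A_CL; have [dk_CL dk_min] := run k_range.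
rewrite /= -(hnorm_monomial_le r_gt0 _ x0_real) ?dk_min //; first exact: run_monomial.
exact: (CL_monomial (prim_expr_order xi_prim) k_range A_CL).
Qed.

Lemma outp_monomial k : (k <= (2 * n).-1)%N -> monomial r (outp d k).
Proof.
elim: k => [|k IH] k_le /=; first exact: monomial1.
by apply: monomialM; [apply: run_monomial; rewrite k_le | apply: IH; apply: ltnW].
Qed.

Lemma outp_mulmx k : outp d k *m y = resid d y k.
Proof. by elim: k => [|k IH] /=; rewrite ?mul1mx // -mulmxA IH. Qed.

Lemma rotation_step k i : (1 <= k <= (2 * n).-1)%N -> (i <= N)%N ->
  CL n xi r k = CL_a n xi r i.+1 ->
  (forall p : 'I_n, p != i :> nat -> resid d y k p 0 = resid d y k.-1 p 0) /\
  rot_max r (resid d y k (inord i) 0).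
Proof.
case: k => // k k_range i_le CL_k; have [dk_CL _] := run k_range.
move: dk_CL; rewrite CL_k => /mapP [e _ dkE] /=; rewrite dkE.
set u := resid d y k.
split=> [p p_i|c c_root]; first by rewrite CL_a_mulmx (negbTE p_i) mul1r.
have [f ->] := prim_rootP xi_prim c_root.
(* the leader [a_(i+1)^((f + e) mod r)] rotates coordinate [i] by [xi^f] more than [d k] *)
have A_CL : iter ((f + e) %% r)%N (mulmx (gen_a n xi i.+1)) 1%:M \in CL n xi r k.+1.
  by rewrite CL_k; apply/mapP; exists ((f + e) %% r)%N; rewrite // mem_iota ltn_pmod.
have := run_corr_max k_range A_CL; rewrite /= dkE (corr_le_at (i0 := inord i)) //.
  by rewrite !CL_a_mulmx inordK // eqxx prim_expr_mod // exprD mulrA.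
move=> p; rewrite -(inj_eq val_inj) /= inordK // => p_i.
by rewrite !CL_a_mulmx (negbTE p_i).
Qed.

Lemma insertion_step L : (0 < L <= N)%N ->
  normalized_prefix r L.-1 (resid d y L.*2) ->
  rot_max r (resid d y L.*2 (inord L) 0) ->
  normalized_prefix r L (resid d y L.*2.+1).
Proof.
move=> L_range u_norm uL_max; set u := resid d y L.*2.
have k_range : (1 <= L.*2.+1 <= (2 * n).-1)%N by rewrite last_step; lia.
have CL_k : CL n xi r L.*2.+1 = CL_b C n L.
  by rewrite /CL /= odd_double uphalf_double ifT //; lia.
have [dk_CL _] := run k_range; move: dk_CL; rewrite CL_k => /mapP [m].
rewrite mem_iota add0n ltnS => m_le dkE.
have opt m' : (m' <= L)%N ->
    corr x0 (insert_col (L - m') L u) <= corr x0 (insert_col (L - m) L u).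
  move=> m'_le; rewrite -!CL_b_mulmx; try lia.
  rewrite -dkE; apply: (run_corr_max k_range); rewrite CL_k.
  by apply/mapP; exists m'; rewrite // mem_iota.
have x0_lt q : (q < N)%N -> x0 (inord q) 0 < x0 (inord q.+1) 0.
  by move=> q_lt; apply: x0_incr; rewrite !inordK; lia.
rewrite /= dkE CL_b_mulmx; last by lia.
apply: insert_col_normalized => //; first lia.
- move=> lt_pL; have := opt m.-1.
  rewrite (_ : L - m.-1 = (L - m).+1)%N ?corr_insert_colS_le; try lia.
    by apply; lia.
  by apply: x0_lt; lia.
- case p_eq: (L - m)%N => [//|q] _ /=.
  have := opt m.+1; rewrite p_eq (_ : L - m.+1 = q)%N ?corr_insert_colS_ge; try lia.
    by apply; lia.
  by apply: x0_lt; lia.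
Qed.

Lemma run_normalized L : (L <= N)%N -> normalized_prefix r L (resid d y L.*2.+1).
Proof.
elim: L => [_|L IH lt_LN].
  have k_range : (1 <= 1 <= (2 * n).-1)%N by rewrite last_step.
  have [_ u0_max] := rotation_step (i := 0) k_range isT erefl.
  by split=> t //; rewrite leqn0 => /eqP->.
have k_range : (1 <= L.*2.+2 <= (2 * n).-1)%N by rewrite last_step; lia.
have CL_k : CL n xi r L.*2.+2 = CL_a n xi r L.+2 by rewrite /CL /= odd_double /= doubleK.
have [u_eq uL_max] := rotation_step k_range lt_LN CL_k.
rewrite doubleS; apply: insertion_step; rewrite ?doubleS //.
apply: normalized_prefix_eq (IH (ltnW lt_LN)) => t tL.
by rewrite u_eq // inordK; lia.
Qed.

Lemma outp_corr_max A : monomial r A ->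
  corr x0 (A *m y) <= corr x0 (outp d (2 * n).-1 *m y).
Proof.
move=> A_mon; have D_mon := outp_monomial (leqnn (2 * n).-1).
have [B [B_mon ->]] := monomial_divr r_gt0 A_mon D_mon.
have [w_max w_sorted] := normalized_prefix_full (run_normalized (leqnn N)).
have x0_mono (i j : 'I_n) : (i <= j)%N -> x0 i 0 <= x0 j 0.
  by rewrite leq_eqVlt => /predU1P [/val_inj->//|/x0_incr/ltW].
have x0_ge0 i : 0 <= x0 i 0 by apply: ltW.
rewrite -mulmxA outp_mulmx last_step.
exact: (corr_monomial_le x0_ge0 x0_mono w_max w_sorted B_mon).
Qed.

End Run.

Theorem mainTheorem16 (C : numClosedFieldType) (n r : nat) (xi : C)
    (x0 : 'cV[C]_n) :
  (1 <= n)%N -> (1 <= r)%N -> r.-primitive_root xi ->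
  (forall i, 0 < x0 i 0) ->
  (forall i j : 'I_n, (i < j)%N -> x0 i 0 < x0 j 0) ->
  hnorm x0 = 1 ->
  forall (g : 'M[C]_n), inG r g ->
  forall (y : 'cV[C]_n), inDR r x0 g y ->
  forall (d : nat -> 'M[C]_n), is_run xi r x0 y d ->
  inSg r x0 g (outp d (2 * n).-1).
Proof.
case: n x0 => [//|N] x0 _ r_gt0 xi_prim x0_gt0 x0_incr _ g g_G y y_DR d run.
have D_mon := outp_monomial xi_prim run (leqnn (2 * N.+1).-1).
have g_mon : monomial r g by apply/(inG_monomial r_gt0).
apply: NNPP => D_notSg.
have := y_DR _ (proj2 (inG_monomial r_gt0 _) D_mon) D_notSg.
rewrite (hnorm_monomial_lt r_gt0 _ (x0_real x0_gt0)) //.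
move/lt_le_trans/(_ (outp_corr_max r_gt0 xi_prim x0_gt0 x0_incr run g_mon)).
by rewrite ltxx.
Qed.
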